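(* For any valid scheme (satisfying (C1)–(C8)) with $N\ge2$, $K\ge2$, \[ \frac{N}{N-1}\,\rho_U+N\rho_S\ \ge\ \frac{N}{N-1}. \]
   Context: Model (SPIR with user-side common randomness). There are $N\ge1$ non-colluding databases, each storing the same $K\ge2$ messages $W_1,\dots,W_K$. Each message consists of $L$ i.i.d. symbols uniform over a sufficiently large finite field $\mathbb{F}_q$; entropies are in $q$-ary units, so $H(W_k)=L$ and $H(W_{1:K})=KL$. The databases share server-side common randomness $\mathcal{R}_S$, unknown to the user. The user holds user-side common randomness $\mathcal{R}_U$, a subset of the components of $\mathcal{R}_S$, unknown to the databases except for its size (uniform over subsets of given cardinality). $\mathcal{F}$ is the user's retrieval-strategy randomness. To retrieve $W_k$ the user sends $Q_n^{[k,\mathcal{R}_U]}$ to database $n$, receiving $A_n^{[k,\mathcal{R}_U]}$; $W_{\bar k}=\{W_j:j\ne k\}$. A valid scheme satisfies for all $k,n,\mathcal{R}_U$: (C1) $I(W_{1:K};k,\mathcal{F},\mathcal{R}_S,\mathcal{R}_U)=0$; (C2) $I(Q_{1:N}^{[k,\mathcal{R}_U]};W_{1:K},\mathcal{R}_S\setminus\mathcal{R}_U)=0$; (C3) $H(Q_{1:N}^{[k,\mathcal{R}_U]}\mid\mathcal{F})=0$; (C4) $H(A_n^{[k,\mathcal{R}_U]}\mid Q_n^{[k,\mathcal{R}_U]},W_{1:K},\mathcal{R}_S)=0$; (C5) $H(W_k\mid\mathcal{F},A_{1:N}^{[k,\mathcal{R}_U]},\mathcal{R}_U)=0$; (C6)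 user privacy: for all $k,k',n,\mathcal{R}_U$ there is $\mathcal{R}_U'$ with $H(\mathcal{R}_U')=H(\mathcal{R}_U)$ and $(Q_n^{[k,\mathcal{R}_U]},A_n^{[k,\mathcal{R}_U]},W_{1:K},\mathcal{R}_S)\sim(Q_n^{[k',\mathcal{R}_U']},A_n^{[k',\mathcal{R}_U']},W_{1:K},\mathcal{R}_S)$; (C7) $I(W_{\bar k};\mathcal{F},A_{1:N}^{[k,\mathcal{R}_U]},\mathcal{R}_U)=0$; (C8) $I(\mathcal{R}_S\setminus\mathcal{R}_U;\mathcal{F},A_{1:N}^{[k,\mathcal{R}_U]},W_k,\mathcal{R}_U)=0$. $\rho_S=H(\mathcal{R}_S)/L$, $\rho_U=H(\mathcal{R}_U)/L$. *)

From HB Require Import structures.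
From mathcomp Require Import all_boot all_order all_algebra.
From mathcomp Require Import reals exp.
Set Implicit Arguments. Unset Strict Implicit. Unset Printing Implicit Defensive.
Import Order.TTheory GRing.Theory Num.Theory.
Local Open Scope ring_scope.

Section Info.
Variables (R : realType) (Omega : finType) (P : {ffun Omega -> R}).

Definition is_pmf : Prop := (forall w, 0 <= P w) /\ \sum_(w : Omega) P w = 1.

Definition pr (T : finType) (X : Omega -> T) (x : T) : R :=
  \sum_(w : Omega | X w == x) P w.

Definition plogp (b p : R) : R := if p == 0 then 0 else p * (ln p / ln b).

Definition entropy (b : R) (T : finType) (X : Omega -> T) : R :=
  - \sum_(x : T) plogp b (pr X x).

Definition pairRV (T U : finType) (X : Omega -> T) (Y : Omega -> U) :
  Omega -> (T * U)%type := fun w => (X w, Y w).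

Definition condH (b : R) (T U : finType) (X : Omega -> T) (Y : Omega -> U) : R :=
  entropy b (pairRV X Y) - entropy b Y.

Definition minfo (b : R) (T U : finType) (X : Omega -> T) (Y : Omega -> U) : R :=
  entropy b X + entropy b Y - entropy b (pairRV X Y).

End Info.

Section Scheme.
Variables (Omega : finType) (F : finFieldType) (N K L M : nat) (C : finType).

Definition msg_t := {ffun 'I_K -> {ffun 'I_L -> F}}.
(* server-side common randomness R_S: M components with values in C *)
Definition rand_t := {ffun 'I_M -> C}.

Definition Wk (W : Omega -> msg_t) (k : 'I_K) : Omega -> {ffun 'I_L -> F} :=
  fun w => W w k.
Definition Wbar (W : Omega -> msg_t) (k : 'I_K) :
  Omega -> {ffun 'I_K -> option {ffun 'I_L -> F}} :=
  fun w => [ffun j => if j == k then None else Some (W w j)].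
(* the components of R_S indexed by S (the user-side randomness R_U when
   S is the user's subset; R_S \ R_U when S is its complement) *)
Definition restrRV (RS : Omega -> rand_t) (S : {set 'I_M}) :
  Omega -> {ffun 'I_M -> option C} :=
  fun w => [ffun i => if i \in S then Some (RS w i) else None].

End Scheme.

(* A valid SPIR scheme with user-side common randomness.
   - P : probability on the finite sample space Omega;
   - W : all K messages; RS : server-side common randomness (M components);
   - the user-side randomness R_U consists of the components in a subset
     S of 'I_M with #|S| = m (R_U = restrRV RS S);
   - Fr : the user's strategy randomness F;
   - Q k S n, A k S n : query to / answer from database n when retrieving
     W_k with user-side randomness indexed by S.
   Entropies are measured in q-ary units, q = #|F|. *)
Definition valid_scheme (R : realType) (Omega : finType) (P : {ffun Omega -> R})
  (F : finFieldType) (N K L M m : nat) (C TF TQ TA : finType)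
  (W : Omega -> msg_t F K L) (RS : Omega -> rand_t M C) (Fr : Omega -> TF)
  (Q : 'I_K -> {set 'I_M} -> 'I_N -> Omega -> TQ)
  (A : 'I_K -> {set 'I_M} -> 'I_N -> Omega -> TA) : Prop :=
  let q : R := #|F|%:R in
  let RU := restrRV RS in
  let Qall (k : 'I_K) (S : {set 'I_M}) := fun w => [ffun n => Q k S n w] in
  let Aall (k : 'I_K) (S : {set 'I_M}) := fun w => [ffun n => A k S n w] in
  is_pmf P /\
      (forall x : msg_t F K L, pr P W x = 1 / (#|F| ^ (K * L))%:R) /\
      (forall S : {set 'I_M}, #|S| = m ->
         minfo P q W (pairRV Fr (pairRV RS (RU S))) = 0) /\
      (forall (k : 'I_K) (S : {set 'I_M}), #|S| = m ->
         minfo P q (Qall k S) (pairRV W (RU (~: S))) = 0 /\ condH P q (Qall k S) Fr = 0) /\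
      (forall (k : 'I_K) (S : {set 'I_M}) (n : 'I_N), #|S| = m ->
         condH P q (A k S n) (pairRV (Q k S n) (pairRV W RS)) = 0) /\
      (forall (k : 'I_K) (S : {set 'I_M}), #|S| = m ->
         [/\ condH P q (Wk W k) (pairRV Fr (pairRV (Aall k S) (RU S))) = 0,
             minfo P q (Wbar W k) (pairRV Fr (pairRV (Aall k S) (RU S))) = 0 &
             minfo P q (RU (~: S)) (pairRV Fr (pairRV (Aall k S)
                                         (pairRV (Wk W k) (RU S)))) = 0]) /\
      (forall (k k' : 'I_K) (n : 'I_N) (S : {set 'I_M}), #|S| = m ->
         exists2 S' : {set 'I_M}, #|S'| = m /\ entropy P q (RU S') = entropy P q (RU S) &
           forall x, pr P (fun w => (Q k S n w, A k S n w, W w, RS w)) x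
                   = pr P (fun w => (Q k' S' n w, A k' S' n w, W w, RS w)) x).

From HB Require Import structures.
From mathcomp Require Import all_boot all_order all_algebra.
From mathcomp Require Import reals exp.
From mathcomp Require Import ring lra.
Import Order.TTheory GRing.Theory Num.Theory.
Local Open Scope ring_scope.

(* Entropies depend only on the partition of the sample space induced by a
   random variable, so the argument is phrased with three relations between
   such partitions (same partition, "is a function of", "is the join of").  Section RetrievalBound then derives
   H(W_k) <= H(R_U) + (N-1) H(R_S) for one retrieval: by correctness the
   answers reveal W_k given the strategy and R_U; by the chain rule this
   leakage splits over the answers; the first answer leaks at most H(R_U)
   (database and user privacy) and each other one at most H(R_S).
   Finally H(W_k) = L because messages are uniform, user privacy (C6)
   transfers the independence of an unrequested message from a
   query-answer pair through equality of laws, and the rate inequality is a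
   rescaling of L <= H(R_U) + (N-1) H(R_S). *)

Set Implicit Arguments. Unset Strict Implicit. Unset Printing Implicit Defensive.

(* Decides the boolean identities between atom-equality tests that express
   how joint random variables are assembled from their components. *)
Ltac bsolve := first [ done
  | (let h := fresh in intro h; first [discriminate | done])
  | match goal with |- context [?x == ?y] => case: (x == y); bsolve end ].

Definition others (n : nat) (T : Type) (xs : 'I_n -> T) (j : 'I_n) :
  {ffun 'I_n -> option T} :=
  [ffun i => if i == j then None else Some (xs i)].

Lemma tuple_split (Omega : finType) (n : nat) (T : finType) (Xs : 'I_n -> Omega -> T)
  (j : 'I_n) w v :
  ([ffun i => Xs i v] == [ffun i => Xs i w]) =
  (Xs j v == Xs j w) && (others (fun i => Xs i v) j == others (fun i => Xs i w) j).
Proof.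
apply/eqP/andP => [Xvw|[/eqP Xjvw /eqP Ovw]].
  have Xivw i : Xs i v = Xs i w.
    by have := congr1 (fun f : {ffun _} => f i) Xvw; rewrite !ffunE.
  by rewrite Xivw; split => //; apply/eqP/ffunP => i; rewrite !ffunE Xivw.
apply/ffunP => i; rewrite !ffunE; case: (eqVneq i j) => [->//|ij].
by have := congr1 (fun f : {ffun _} => f i) Ovw; rewrite !ffunE (negbTE ij) => -[].
Qed.

Section Entropy.
Variables (R : realType) (Omega : finType) (P : {ffun Omega -> R}) (b : R).
Hypothesis P_ge0 : forall w, 0 <= P w.
Hypothesis P_sum1 : \sum_w P w = 1.
Hypothesis b_gt1 : 1 < b.

Local Notation H := (entropy P b).

Definition prob (a : pred Omega) : R := \sum_(v | a v) P v.

Lemma entropyE (T : finType) (X : Omega -> T) :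
  H X = - (\sum_w P w * ln (prob (fun v => X v == X w))) / ln b.
Proof.
have -> : \sum_w P w * ln (prob (fun v => X v == X w))
        = \sum_x pr P X x * ln (pr P X x).
  rewrite (partition_big X predT) //=; apply: eq_bigr => x _.
  by rewrite /pr big_distrl /=; apply: eq_bigr => w /eqP <-.
rewrite /entropy mulNr big_distrl /=; congr (- _); apply: eq_bigr => x _.
by rewrite /plogp; case: eqP => [->|_]; rewrite ?mul0r ?mulrA.
Qed.

Lemma prob_ge0 a : 0 <= prob a.
Proof. exact: sumr_ge0. Qed.

Lemma prob_le (a c : pred Omega) : (forall v, a v -> c v) -> prob a <= prob c.
Proof.
move=> ac; rewrite /prob [X in _ <= X]big_mkcond [X in X <= _]big_mkcond.
apply: ler_sum => v _; case av: (a v); first by rewrite ac.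
by case: (c v).
Qed.

Lemma prob_ge_atom (a : pred Omega) w : a w -> P w <= prob a.
Proof. by move=> aw; rewrite /prob (bigD1 w) //= lerDl sumr_ge0. Qed.

Lemma prob_gt0 (a : pred Omega) w : 0 < P w -> a w -> 0 < prob a.
Proof. by move=> Pw aw; apply: lt_le_trans Pw (prob_ge_atom aw). Qed.

(* Entropies only depend on the partition of Omega induced by a random
   variable; the three relations below compare such partitions. *)
Definition same_partition (T U : finType) (X : Omega -> T) (Y : Omega -> U) :=
  forall w v, (X v == X w) = (Y v == Y w).

(* Y is a function of X. *)
Definition finer (T U : finType) (X : Omega -> T) (Y : Omega -> U) :=
  forall w v, X v == X w -> Y v == Y w.

Definition joint (T U V : finType) (J : Omega -> T) (X : Omega -> U) (Y : Omega -> V) :=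
  forall w v, (J v == J w) = (X v == X w) && (Y v == Y w).

Lemma entropy_same_partition (T U : finType) (X : Omega -> T) (Y : Omega -> U) :
  same_partition X Y -> H X = H Y.
Proof.
move=> XY; rewrite !entropyE; congr (- _ / _); apply: eq_bigr => w _.
by congr (_ * ln _); apply: eq_bigl => v; rewrite XY.
Qed.

Lemma entropy_finer (T U : finType) (X : Omega -> T) (Y : Omega -> U) :
  finer X Y -> H Y <= H X.
Proof.
move=> XY; rewrite !entropyE ler_pM2r ?invr_gt0 ?ln_gt0 // lerN2.
apply: ler_sum => w _; have := P_ge0 w; rewrite le0r => /orP[/eqP->|Pw].
  by rewrite !mul0r.
have pX : 0 < prob (fun v => X v == X w) by apply: (prob_gt0 Pw).
have pY : 0 < prob (fun v => Y v == Y w) by apply: (prob_gt0 Pw).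
by rewrite ler_pM2l // ler_ln ?posrE //; apply: prob_le => v; apply: XY.
Qed.

Lemma ln_le_subr1 (x : R) : 0 < x -> ln x <= x - 1.
Proof. by move=> x0; have := expR_ge1Dx (ln x); rewrite lnK ?posrE //; lra. Qed.

Lemma sum_ratio_le1 (S : pred Omega) (p : Omega -> R) :
  (forall w, S w -> prob S <= p w) -> \sum_(w | S w) P w / p w <= 1.
Proof.
move=> Sp; have := prob_ge0 S; rewrite le0r => /orP[/eqP S0|Spos].
  rewrite big1 // => w Sw.
  by rewrite (psumr_eq0P (fun i _ => P_ge0 i) S0 Sw) mul0r.
apply: le_trans (_ : \sum_(w | S w) P w / prob S <= 1).
  apply: ler_sum => w Sw; apply: ler_wpM2l; first exact: P_ge0.
  by rewrite lef_pV2 ?posrE ?Sp //; apply: lt_le_trans Spos (Sp w Sw).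
by rewrite -big_distrl /= -/(prob S) divff ?gt_eqF.
Qed.

Section Submodularity.
Variables (T1 T2 T3 : finType) (X : Omega -> T1) (Y : Omega -> T2) (Z : Omega -> T3).

Let pXZ w := prob (fun v => (X v == X w) && (Z v == Z w)).
Let pYZ w := prob (fun v => (Y v == Y w) && (Z v == Z w)).
Let pXYZ w := prob (fun v => [&& X v == X w, Y v == Y w & Z v == Z w]).
Let pZ w := prob (fun v => Z v == Z w).

(* The expectation of p(x,z) p(y,z) / (p(x,y,z) p(z)) is at most one: after
   expanding the numerator over pairs of outcomes (x, y) with a common Z-value,
   the outcomes w compatible with both form a single atom of (X,Y,Z). *)
Lemma ratio_mean_le1 : \sum_w P w * (pXZ w * pYZ w / (pXYZ w * pZ w)) <= 1.
Proof.
pose G x y w := if (X x == X w) && (Z x == Z w) && ((Y y == Y w) && (Z y == Z w))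
  then P x * P y * (P w / (pXYZ w * pZ w)) else 0.
have expand : \sum_w P w * (pXZ w * pYZ w / (pXYZ w * pZ w))
     = \sum_w \sum_x \sum_y G x y w.
  apply: eq_bigr => w _.
  rewrite /G mulrCA; move: (P w / (pXYZ w * pZ w)) => c.
  rewrite [pXZ w]big_mkcond [pYZ w]big_mkcond !big_distrl /=.
  apply: eq_bigr => x _; rewrite -mulrA big_distrl big_distrr /=.
  apply: eq_bigr => y _.
  case: ((X x == X w) && (Z x == Z w)); case: ((Y y == Y w) && (Z y == Z w));
    by rewrite /= ?mul0r ?mulr0 ?mulrA.
have atom_bound x y : \sum_w G x y w <= if Z y == Z x then P x * P y / pZ x else 0.
  have := P_ge0 x; rewrite le0r => /orP[/eqP Px0 | Px].
    by rewrite big1 ?Px0 ?mul0r ?if_same // => w _; rewrite /G Px0 !mul0r if_same.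
  have pZx : 0 < pZ x by apply: (prob_gt0 Px).
  pose S w := (X x == X w) && (Z x == Z w) && ((Y y == Y w) && (Z y == Z w)).
  have -> : \sum_w G x y w = P x * P y / pZ x * \sum_(w | S w) P w / pXYZ w.
    rewrite big_distrr /= [RHS]big_mkcond /=; apply: eq_bigr => w _.
    rewrite /G -/(S w); case Sw: (S w) => //.
    have -> : pZ w = pZ x by case/andP: Sw => /andP[_ /eqP Zxw] _; rewrite /pZ Zxw.
    by rewrite invfM; ring.
  case: eqP => [Zyx|Zyx]; last first.
    rewrite big_pred0 ?mulr0 // => w; apply/negP.
    by case/andP=> /andP[_ /eqP Zxw] /andP[_ /eqP Zyw]; apply: Zyx; rewrite Zyw.
  rewrite -[X in _ <= X]mulr1; apply: ler_wpM2l; first by rewrite divr_ge0 ?mulr_ge0 // ltW.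
  apply: sum_ratio_le1 => w /andP[/andP[/eqP Xw /eqP Zw] /andP[/eqP Yw _]].
  apply: prob_le => v /andP[/andP[/eqP Xv /eqP Zv] /andP[/eqP Yv _]].
  by rewrite -Xv -Yv -Zv Xw Yw Zw !eqxx.
rewrite expand exchange_big /=.
under eq_bigr => x _ do rewrite exchange_big /=.
rewrite -P_sum1; apply: le_trans (ler_sum _ (fun x _ => ler_sum _ (fun y _ => atom_bound x y))) _.
apply: ler_sum => x _; rewrite -big_mkcond /=.
under eq_bigr => y _ do rewrite mulrAC.
rewrite -big_distrr /= -/(pZ x).
case: (eqVneq (pZ x) 0) => [pZ0|pZn0]; last by rewrite divfK.
have -> : P x = 0 by apply/le_anti; rewrite P_ge0 andbT -pZ0 prob_ge_atom.
by rewrite !mul0r.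
Qed.

Lemma entropy_submod_pairs : H (pairRV (pairRV X Y) Z) + H Z
   <= H (pairRV X Z) + H (pairRV Y Z).
Proof.
have atomE (T : finType) (V : Omega -> T) (pV : Omega -> R) :
    (forall w, pV w = prob (fun v => V v == V w)) ->
    H V = - (\sum_w P w * ln (pV w)) / ln b.
  by move=> pVE; rewrite entropyE; congr (- _ / _); apply: eq_bigr => w _; rewrite pVE.
rewrite (atomE _ (pairRV (pairRV X Y) Z) pXYZ); last by move=> w; apply: eq_bigl => v; rewrite /pairRV !xpair_eqE andbA.
rewrite (atomE _ (pairRV X Z) pXZ); last by move=> w; apply: eq_bigl => v; rewrite /pairRV xpair_eqE.
rewrite (atomE _ (pairRV Y Z) pYZ); last by move=> w; apply: eq_bigl => v; rewrite /pairRV xpair_eqE.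
rewrite (atomE _ Z pZ) //.
have gibbs : \sum_w P w * (ln (pXZ w) + ln (pYZ w) - ln (pXYZ w) - ln (pZ w)) <= 0.
  apply: le_trans (_ : \sum_w P w * (pXZ w * pYZ w / (pXYZ w * pZ w) - 1) <= 0).
    apply: ler_sum => w _; have := P_ge0 w; rewrite le0r => /orP[/eqP ->|Pw].
      by rewrite !mul0r.
    have pos (a : pred Omega) : a w -> 0 < prob a by apply: prob_gt0.
    have [a c d e] : [/\ 0 < pXZ w, 0 < pYZ w, 0 < pXYZ w & 0 < pZ w].
      by split; apply: pos; rewrite !eqxx.
    have -> : ln (pXZ w) + ln (pYZ w) - ln (pXYZ w) - ln (pZ w)
          = ln (pXZ w * pYZ w / (pXYZ w * pZ w)).
      by rewrite ln_div ?posrE ?mulr_gt0 // !lnM ?posrE //; lra.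
    apply: ler_wpM2l; first exact: ltW.
    by apply: ln_le_subr1; rewrite divr_gt0 ?mulr_gt0.
  under eq_bigr => w _ do rewrite mulrBr mulr1.
  by rewrite sumrB P_sum1 subr_le0 ratio_mean_le1.
have split_sum : \sum_w P w * (ln (pXZ w) + ln (pYZ w) - ln (pXYZ w) - ln (pZ w))
  = \sum_w P w * ln (pXZ w) + \sum_w P w * ln (pYZ w) - \sum_w P w * ln (pXYZ w)
    - \sum_w P w * ln (pZ w).
  under eq_bigr => w _ do rewrite !mulrBr mulrDr.
  by rewrite !sumrB big_split.
have lnb := ln_gt0 b_gt1.
rewrite -!mulrDl ler_pM2r ?invr_gt0 //; lra.
Qed.

End Submodularity.

Lemma entropy_submod (T1 T2 T3 T4 : finType) (A : Omega -> T1) (B : Omega -> T2)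
  (J : Omega -> T3) (M : Omega -> T4) :
  joint J A B -> finer A M -> finer B M -> H J + H M <= H A + H B.
Proof.
move=> JAB AM BM.
have absorb (T : finType) (V : Omega -> T) : finer V M -> H V = H (pairRV V M).
  move=> VM; apply: entropy_same_partition => w v; rewrite xpair_eqE.
  by case e: (V v == V w); rewrite // (VM _ _ e).
rewrite (absorb _ A) // (absorb _ B) //.
have -> : H J = H (pairRV (pairRV A B) M).
  apply: entropy_same_partition => w v; rewrite !xpair_eqE JAB.
  by case e: (A v == A w); rewrite //= (AM _ _ e) andbT.
exact: entropy_submod_pairs.
Qed.

Lemma entropy_const : H (fun _ : Omega => tt) = 0.
Proof.
rewrite entropyE (eq_bigr (fun w => P w * ln 1)) => [|w _].
  by rewrite ln1 big1 ?oppr0 ?mul0r // => w _; rewrite mulr0.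
by congr (_ * ln _); rewrite /prob -P_sum1; apply: eq_bigl.
Qed.

Lemma entropy_subadd (T1 T2 T3 : finType) (A : Omega -> T1) (B : Omega -> T2)
  (J : Omega -> T3) : joint J A B -> H J <= H A + H B.
Proof.
move=> JAB; have := @entropy_submod _ _ _ _ A B J (fun _ => tt) JAB.
by rewrite entropy_const addr0; apply=> w v _.
Qed.

Lemma determined_finer (T1 T2 T3 T4 T5 : finType) (Y : Omega -> T1) (A1 : Omega -> T2)
  (J1 : Omega -> T3) (A2 : Omega -> T4) (J2 : Omega -> T5) :
  H J1 = H A1 -> joint J1 A1 Y -> joint J2 A2 Y -> finer A2 A1 -> H J2 = H A2.
Proof.
move=> det1 J1E J2E A21.
have J2J1 : joint J2 A2 J1.
  move=> w v; rewrite J2E J1E.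
  by case e: (A2 v == A2 w); rewrite //= (A21 _ _ e).
have J1A1 : finer J1 A1 by move=> w v; rewrite J1E => /andP[].
have := entropy_submod J2J1 A21 J1A1; rewrite det1 => le_J2.
apply/le_anti; rewrite (entropy_finer (_ : finer J2 A2)) ?andbT; first lra.
by move=> w v; rewrite J2E => /andP[].
Qed.

Lemma minfo_finer (T1 T2 T3 T4 T5 T6 : finType) (X : Omega -> T1) (Y : Omega -> T2)
  (J : Omega -> T3) (X' : Omega -> T4) (Y' : Omega -> T5) (J' : Omega -> T6) :
  finer X' X -> finer Y' Y -> joint J X Y -> joint J' X' Y' ->
  H X + H Y - H J <= H X' + H Y' - H J'.
Proof.
move=> X'X Y'Y JXY J'XY.
have step1 : H (pairRV X' Y) + H X <= H X' + H J.
  apply: entropy_submod => [w v|//|w v]; last by rewrite JXY => /andP[].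
  rewrite xpair_eqE JXY.
  by case e: (X' v == X' w); rewrite //= (X'X _ _ e).
have step2 : H J' + H Y <= H Y' + H (pairRV X' Y).
  apply: entropy_submod => [w v|//|w v]; last by rewrite xpair_eqE => /andP[].
  rewrite xpair_eqE J'XY.
  by case e: (Y' v == Y' w); rewrite ?(Y'Y _ _ e) ?andbF ?andbT.
lra.
Qed.

Definition prefix (n : nat) (T : finType) (Xs : 'I_n -> Omega -> T) (m : nat) :
  Omega -> {ffun 'I_n -> option T} :=
  fun w => [ffun i : 'I_n => if (i < m)%N then Some (Xs i w) else None].

Lemma prefix_eq (n : nat) (T : finType) (Xs : 'I_n -> Omega -> T) m w v :
  (prefix Xs m v == prefix Xs m w) = [forall (i : 'I_n | (i < m)%N), Xs i v == Xs i w].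
Proof.
apply/eqP/forallP => [e i|Xvw].
  apply/implyP => im; have := congr1 (fun f : {ffun _} => f i) e.
  by rewrite !ffunE im => -[->].
apply/ffunP => i; rewrite !ffunE; case: ifP => im //.
by have /implyP/(_ im)/eqP-> := Xvw i.
Qed.

Lemma prefixS_eq (n : nat) (T : finType) (Xs : 'I_n -> Omega -> T) m (lt_mn : (m < n)%N) w v :
  (prefix Xs m.+1 v == prefix Xs m.+1 w)
  = (Xs (Ordinal lt_mn) v == Xs (Ordinal lt_mn) w) && (prefix Xs m v == prefix Xs m w).
Proof.
rewrite !prefix_eq; apply/forallP/andP => [Xvw|[Xmvw /forallP Xvw] i].
  split; first by have /implyP := Xvw (Ordinal lt_mn); apply; rewrite /= ltnSn.
  by apply/forallP => i; apply/implyP => im; have /implyP := Xvw i; apply; exact: ltnW.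
apply/implyP; rewrite ltnS leq_eqVlt => /orP[/eqP im|im].
  by have -> : i = Ordinal lt_mn by apply: val_inj.
by have /implyP := Xvw i; apply.
Qed.

Lemma cond_entropy_tuple_le (n : nat) (T TZ : finType) (Xs : 'I_n -> Omega -> T)
  (Z : Omega -> TZ) :
  H (pairRV (fun w => [ffun i => Xs i w]) Z) - H Z
  <= \sum_i (H (pairRV (Xs i) Z) - H Z).
Proof.
have prefix_bound m : (m <= n)%N ->
    H (pairRV (prefix Xs m) Z) - H Z <= \sum_(i : 'I_n | (i < m)%N) (H (pairRV (Xs i) Z) - H Z).
  elim: m => [|m IH] le_mn.
    rewrite big_pred0 // (_ : H (pairRV (prefix Xs 0) Z) = H Z) ?subrr //.
    apply: entropy_same_partition => w v; rewrite xpair_eqE prefix_eq.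
    by rewrite (_ : [forall (i : 'I_n | (i < 0)%N), _] = true) //; apply/forallP.
  have lt_mn : (m < n)%N := le_mn; set i0 := Ordinal lt_mn.
  have step : H (pairRV (prefix Xs m.+1) Z) + H Z
           <= H (pairRV (Xs i0) Z) + H (pairRV (prefix Xs m) Z).
    apply: entropy_submod => w v; rewrite !xpair_eqE; last by case/andP.
      rewrite (prefixS_eq _ lt_mn).
      by case: (Xs i0 v == _); case: (Z v == _); case: (prefix Xs m v == _).
    by case/andP.
  rewrite (bigD1 i0) /= ?ltnSn //.
  have -> : \sum_(i : 'I_n | (i < m.+1)%N && (i != i0)) (H (pairRV (Xs i) Z) - H Z)
          = \sum_(i : 'I_n | (i < m)%N) (H (pairRV (Xs i) Z) - H Z).
    apply: eq_bigl => i; rewrite ltnS leq_eqVlt -(inj_eq val_inj) /=.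
    by case: (ltngtP i m).
  have := IH (ltnW le_mn); lra.
have := prefix_bound n (leqnn n).
have -> : H (pairRV (prefix Xs n) Z) = H (pairRV (fun w => [ffun i => Xs i w]) Z).
  apply: entropy_same_partition => w v; rewrite !xpair_eqE prefix_eq; congr (_ && _).
  apply/forallP/eqP => [Xvw|/ffunP Xvw i]; last first.
    by apply/implyP => _; have := Xvw i; rewrite !ffunE => ->.
  by apply/ffunP => i; rewrite !ffunE; have /implyP/(_ (ltn_ord i))/eqP := Xvw i.
by under [X in _ <= X -> _]eq_bigl => i do rewrite ltn_ord.
Qed.

Lemma coordinate_determined (n : nat) (T TZ : finType) (Xs : 'I_n -> Omega -> T)
  (Z : Omega -> TZ) j :
  H (pairRV (fun w => [ffun i => Xs i w]) Z) = H Z -> H (pairRV (Xs j) Z) = H Z.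
Proof.
move=> det_all.
have le_all : H (pairRV (Xs j) Z) <= H (pairRV (fun w => [ffun i => Xs i w]) Z).
  by apply: entropy_finer => w v; rewrite !xpair_eqE (tuple_split Xs j); bsolve.
have ge_Z : H Z <= H (pairRV (Xs j) Z).
  by apply: entropy_finer => w v; rewrite xpair_eqE; bsolve.
lra.
Qed.

Lemma unrequested_indep (n : nat) (TX TB TFr TQ TA TU : finType) (X : Omega -> TX)
  (Wb : Omega -> TB) (Fr : Omega -> TFr) (Q : Omega -> TQ) (As : 'I_n -> Omega -> TA)
  (U : Omega -> TU) j :
  finer Wb X -> H (pairRV Q Fr) = H Fr ->
  minfo P b Wb (pairRV Fr (pairRV (fun w => [ffun i => As i w]) U)) = 0 ->
  minfo P b X (pairRV (As j) Q) = 0.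
Proof.
rewrite /minfo => WbX Q_det Wb_indep.
set View := pairRV Fr (pairRV (fun w => [ffun i => As i w]) U).
have subadd : H (pairRV X (pairRV (As j) Q)) <= H X + H (pairRV (As j) Q).
  exact: entropy_subadd.
have dpi : H X + H (pairRV (As j) Q) - H (pairRV X (pairRV (As j) Q))
        <= H Wb + H (pairRV Q View) - H (pairRV Wb (pairRV Q View)).
  apply: minfo_finer => // w v; rewrite /View /pairRV /= ?xpair_eqE ?(tuple_split As j); bsolve.
have view_det : H (pairRV Q View) = H View.
  apply: (determined_finer (Y := Q) Q_det) => w v; rewrite /View /pairRV /= ?xpair_eqE; bsolve.
have view_det_Wb : H (pairRV Wb (pairRV Q View)) = H (pairRV Wb View).
  apply: (determined_finer (Y := Q) Q_det) => w v; rewrite /View /pairRV /= ?xpair_eqE; bsolve.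
lra.
Qed.

Section RetrievalBound.
(* The information-theoretic core of the converse, for one retrieval: the
   user retrieves W_k out of W = (W_k, Wb) from n.+1 databases, with strategy
   Fr, queries Qs, answers As and user-side randomness U, where the server-side
   randomness is RS = (U, V). *)
Variables (n : nat) (TW TWk TWb TFr TU TV TRS TQ TA : finType).
Variables (W : Omega -> TW) (Wk : Omega -> TWk) (Wb : Omega -> TWb) (Fr : Omega -> TFr)
  (U : Omega -> TU) (V : Omega -> TV) (RS : Omega -> TRS)
  (Qs : 'I_n.+1 -> Omega -> TQ) (As : 'I_n.+1 -> Omega -> TA).
Local Notation Qall := (fun w => [ffun i => Qs i w]).
Local Notation Aall := (fun w => [ffun i => As i w]).
Local Notation FU := (pairRV Fr U).
Local Notation FAU := (pairRV Fr (pairRV Aall U)).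
Local Notation WFU := (pairRV W FU).
Local Notation WFAU := (pairRV W FAU).
Local Notation WkFU := (pairRV Wk FU).
Local Notation WkFAU := (pairRV Wk FAU).

Hypothesis W_split : forall w v, (W v == W w) = (Wk v == Wk w) && (Wb v == Wb w).
Hypothesis RS_split : forall w v, (RS v == RS w) = (U v == U w) && (V v == V w).
Hypothesis C1 : minfo P b W (pairRV Fr (pairRV RS U)) = 0.
Hypothesis C3 : condH P b Qall Fr = 0.
Hypothesis C4 : forall j, condH P b (As j) (pairRV (Qs j) (pairRV W RS)) = 0.
Hypothesis C5 : condH P b Wk FAU = 0.
Hypothesis C7 : minfo P b Wb FAU = 0.
Hypothesis C8 : minfo P b V (pairRV Fr (pairRV Aall (pairRV Wk U))) = 0.
Hypothesis Wk_private : forall j, minfo P b Wk (pairRV (As j) (Qs j)) = 0.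

(* Closes the partition side conditions by case analysis on atom tests. *)
Local Ltac atoms j :=
  move=> w v; rewrite /pairRV /= ?xpair_eqE ?W_split ?RS_split
    ?(tuple_split As j) ?(tuple_split Qs j); bsolve.

Lemma Wk_indep_FU : H WkFU = H Wk + H FU.
Proof.
have := C1; rewrite /minfo => C1E.
have subadd := entropy_subadd (J := WkFU) (A := Wk) (B := FU) ltac:(atoms (@ord0 n)).
have dpi := minfo_finer (X := Wk) (Y := FU) (J := WkFU) (X' := W)
  (Y' := pairRV Fr (pairRV RS U)) (J' := pairRV W (pairRV Fr (pairRV RS U)))
  ltac:(atoms (@ord0 n)) ltac:(atoms (@ord0 n)) ltac:(atoms (@ord0 n)) ltac:(atoms (@ord0 n)).
lra.
Qed.

Lemma Wk_le_leakage : H Wk <= H WFU + H FAU - H WFAU - H FU.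
Proof.
have := C5; rewrite /condH => C5E.
have indep := Wk_indep_FU.
have submod := entropy_submod (A := WFU) (B := WkFAU) (J := WFAU) (M := WkFU)
  ltac:(atoms (@ord0 n)) ltac:(atoms (@ord0 n)) ltac:(atoms (@ord0 n)).
lra.
Qed.

Lemma query_determined j : H (pairRV (Qs j) Fr) = H Fr.
Proof. by apply: coordinate_determined; have := C3; rewrite /condH; lra. Qed.

Lemma answer_determined j :
  H (pairRV (As j) (pairRV (Qs j) (pairRV W (pairRV Fr RS)))) = H (pairRV W (pairRV Fr RS)).
Proof.
have := C4 j; rewrite /condH => C4E.
have Q_det := determined_finer (Y := Qs j) (A1 := Fr) (J1 := pairRV (Qs j) Fr)
  (A2 := pairRV W (pairRV Fr RS)) (J2 := pairRV (Qs j) (pairRV W (pairRV Fr RS)))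
  (query_determined j) ltac:(atoms j) ltac:(atoms j) ltac:(atoms j).
have A_det := determined_finer (Y := As j) (A1 := pairRV (Qs j) (pairRV W RS))
  (J1 := pairRV (As j) (pairRV (Qs j) (pairRV W RS)))
  (A2 := pairRV (Qs j) (pairRV W (pairRV Fr RS)))
  (J2 := pairRV (As j) (pairRV (Qs j) (pairRV W (pairRV Fr RS))))
  ltac:(lra) ltac:(atoms j) ltac:(atoms j) ltac:(atoms j).
lra.
Qed.

Lemma answer_residual_le j : H (pairRV W (pairRV (As j) FU)) - H WFU <= H RS - H U.
Proof.
have A_det := answer_determined j.
have drop_Q := entropy_finer (X := pairRV (As j) (pairRV (Qs j) (pairRV W (pairRV Fr RS))))
  (Y := pairRV W (pairRV (As j) FU)) ltac:(atoms j).
have submod := entropy_submod (A := WFU) (B := RS) (J := pairRV W (pairRV Fr RS)) (M := U)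
  ltac:(atoms j) ltac:(atoms j) ltac:(atoms j).
lra.
Qed.

Lemma W_indep_FRS : H (pairRV W (pairRV Fr RS)) = H W + H (pairRV Fr RS).
Proof.
have := C1; rewrite /minfo => C1E.
have U_in_RS1 := entropy_same_partition (X := pairRV Fr (pairRV RS U)) (Y := pairRV Fr RS)
  ltac:(atoms (@ord0 n)).
have U_in_RS2 := entropy_same_partition (X := pairRV W (pairRV Fr (pairRV RS U)))
  (Y := pairRV W (pairRV Fr RS)) ltac:(atoms (@ord0 n)).
lra.
Qed.

Lemma W_indep_RS : H (pairRV W RS) = H W + H RS.
Proof.
have W_FRS := W_indep_FRS.
have subadd := entropy_subadd (J := pairRV W RS) (A := W) (B := RS) ltac:(atoms (@ord0 n)).
have dpi := minfo_finer (X := W) (Y := RS) (J := pairRV W RS) (X' := W)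
  (Y' := pairRV Fr RS) (J' := pairRV W (pairRV Fr RS))
  ltac:(atoms (@ord0 n)) ltac:(atoms (@ord0 n)) ltac:(atoms (@ord0 n)) ltac:(atoms (@ord0 n)).
lra.
Qed.

Lemma V_indep_FU : H (pairRV V FU) = H V + H FU.
Proof.
have := C8; rewrite /minfo => C8E.
have subadd := entropy_subadd (J := pairRV V FU) (A := V) (B := FU) ltac:(atoms (@ord0 n)).
have dpi := minfo_finer (X := V) (Y := FU) (J := pairRV V FU) (X' := V)
  (Y' := pairRV Fr (pairRV Aall (pairRV Wk U)))
  (J' := pairRV V (pairRV Fr (pairRV Aall (pairRV Wk U))))
  ltac:(atoms (@ord0 n)) ltac:(atoms (@ord0 n)) ltac:(atoms (@ord0 n)) ltac:(atoms (@ord0 n)).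
lra.
Qed.

(* The strategy tells nothing more about W_k once A_j, Q_j and U are known:
   I(W_k ; Fr | A_j, Q_j, U) <= 0.  Since W is independent of (Fr, RS) and V
   of (Fr, U), Fr carries no information on (W, RS) beyond Q_j and U, and
   A_j is a function of (Q_j, W, RS). *)
Lemma strategy_uninformative j :
  H (pairRV Wk (pairRV (As j) (pairRV (Qs j) U)))
  + H (pairRV (As j) (pairRV (Qs j) FU))
  - H (pairRV Wk (pairRV (As j) (pairRV (Qs j) FU)))
  - H (pairRV (As j) (pairRV (Qs j) U)) <= 0.
Proof.
have := C4 j; rewrite /condH => C4E.
have W_FRS := W_indep_FRS; have W_RS := W_indep_RS; have V_FU := V_indep_FU; have A_det := answer_determined j.
have RS_subadd := entropy_subadd (J := RS) (A := U) (B := V) ltac:(atoms j).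
have RS_as_VU := entropy_same_partition (X := pairRV V FU) (Y := pairRV Fr RS) ltac:(atoms j).
have Q_det := determined_finer (Y := Qs j) (A1 := Fr) (J1 := pairRV (Qs j) Fr) (A2 := FU)
  (J2 := pairRV (Qs j) FU) (query_determined j) ltac:(atoms j) ltac:(atoms j) ltac:(atoms j).
have submod1 := entropy_submod (A := pairRV W RS) (B := pairRV (Qs j) U)
  (J := pairRV (Qs j) (pairRV W RS)) (M := U) ltac:(atoms j) ltac:(atoms j) ltac:(atoms j).
have submod2 := entropy_submod (A := pairRV (As j) (pairRV (Qs j) U)) (B := pairRV (Qs j) FU)
  (J := pairRV (As j) (pairRV (Qs j) FU)) (M := pairRV (Qs j) U)
  ltac:(atoms j) ltac:(atoms j) ltac:(atoms j).
have submod3 := entropy_submod (A := pairRV (As j) (pairRV (Qs j) (pairRV W RS)))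
  (B := pairRV Wk (pairRV (As j) (pairRV (Qs j) FU)))
  (J := pairRV (As j) (pairRV (Qs j) (pairRV W (pairRV Fr RS))))
  (M := pairRV Wk (pairRV (As j) (pairRV (Qs j) U)))
  ltac:(atoms j) ltac:(atoms j) ltac:(atoms j).
lra.
Qed.

(* The part about Wb vanishes by (C5), (C7); the
   part about W_k is at most I(W_k ; A_j, Q_j, U), by the previous lemma, and
   user privacy leaves only H(U) of it. *)
Lemma answer_leakage_le j :
  H WFU + H (pairRV (As j) FU) - H (pairRV W (pairRV (As j) FU)) - H FU <= H U.
Proof.
have := C5; have := C7; have := Wk_private j; rewrite /minfo /condH => priv C7E C5E.
have W_as_pair1 := entropy_same_partition (X := pairRV Wb WkFU) (Y := WFU) ltac:(atoms j).
have W_as_pair2 := entropy_same_partition (X := pairRV Wb (pairRV Wk (pairRV (As j) FU)))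
  (Y := pairRV W (pairRV (As j) FU)) ltac:(atoms j).
have Wb_subadd := entropy_subadd (J := pairRV Wb WkFU) (A := Wb) (B := WkFU) ltac:(atoms j).
have Wb_dpi := minfo_finer (X := Wb) (Y := pairRV Wk (pairRV (As j) FU))
  (J := pairRV Wb (pairRV Wk (pairRV (As j) FU))) (X' := Wb) (Y' := WkFAU)
  (J' := pairRV Wb WkFAU) ltac:(atoms j) ltac:(atoms j) ltac:(atoms j) ltac:(atoms j).
have Wk_det := determined_finer (Y := Wk) (A1 := FAU) (J1 := WkFAU) (A2 := pairRV Wb FAU)
  (J2 := pairRV Wb WkFAU) ltac:(lra) ltac:(atoms j) ltac:(atoms j) ltac:(atoms j).
have indep := Wk_indep_FU.
have Q_det1 := determined_finer (Y := Qs j) (A1 := Fr) (J1 := pairRV (Qs j) Fr)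
  (A2 := pairRV (As j) FU) (J2 := pairRV (As j) (pairRV (Qs j) FU))
  (query_determined j) ltac:(atoms j) ltac:(atoms j) ltac:(atoms j).
have Q_det2 := determined_finer (Y := Qs j) (A1 := Fr) (J1 := pairRV (Qs j) Fr)
  (A2 := pairRV Wk (pairRV (As j) FU)) (J2 := pairRV Wk (pairRV (As j) (pairRV (Qs j) FU)))
  (query_determined j) ltac:(atoms j) ltac:(atoms j) ltac:(atoms j).
have no_strategy := strategy_uninformative j.
have U_subadd := entropy_subadd (J := pairRV (As j) (pairRV (Qs j) U))
  (A := pairRV (As j) (Qs j)) (B := U) ltac:(atoms j).
have add_U := entropy_finer (X := pairRV Wk (pairRV (As j) (pairRV (Qs j) U)))
  (Y := pairRV Wk (pairRV (As j) (Qs j))) ltac:(atoms j).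
lra.
Qed.

(* By the chain rule the
   leakage I(W ; Aall | Fr, U) splits into the contribution of answer 0,
   at most H(U), and the entropies H(A_j | Fr, U) of the other answers, each
   at most H(RS) by the two previous bounds. *)
Lemma Wk_entropy_bound : H Wk <= H U + n%:R * H RS.
Proof.
have leak := Wk_le_leakage.
have chain := cond_entropy_tuple_le As FU.
have A_as_tuple := entropy_same_partition (X := pairRV Aall FU) (Y := FAU) ltac:(atoms (@ord0 n)).
have drop_answers := entropy_finer (X := WFAU) (Y := pairRV W (pairRV (As ord0) FU))
  ltac:(atoms (@ord0 n)).
rewrite big_ord_recl /= in chain.
have tail_le : \sum_(i < n) (H (pairRV (As (lift ord0 i)) FU) - H FU) <= \sum_(i < n) H RS.
  apply: ler_sum => i _.
  have := answer_leakage_le (lift ord0 i); have := answer_residual_le (lift ord0 i); lra.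
rewrite sumr_const card_ord -mulr_natl in tail_le.
have := answer_leakage_le ord0; have := answer_residual_le ord0; lra.
Qed.

End RetrievalBound.

End Entropy.

Section Laws.
Variables (R : realType) (Omega : finType) (P : {ffun Omega -> R}).

Lemma pr_comp (T U : finType) (X : Omega -> T) (f : T -> U) y :
  pr P (fun w => f (X w)) y = \sum_(x | f x == y) pr P X x.
Proof.
rewrite /pr (partition_big X (fun x => f x == y)) //=.
apply: eq_bigr => x /eqP fx; apply: eq_bigl => w.
by case: (X w =P x) => [->|_]; rewrite ?fx ?eqxx ?andbF.
Qed.

Lemma entropy_same_law (b : R) (T U : finType) (X1 X2 : Omega -> T) (f : T -> U)
  (Y1 Y2 : Omega -> U) :
  (forall x, pr P X1 x = pr P X2 x) ->
  (forall w, Y1 w = f (X1 w)) -> (forall w, Y2 w = f (X2 w)) ->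
  entropy P b Y1 = entropy P b Y2.
Proof.
move=> X12 Y1E Y2E; rewrite /entropy; congr (- _); apply: eq_bigr => y _.
have -> : pr P Y1 y = pr P (fun w => f (X1 w)) y by apply: eq_bigl => w; rewrite Y1E.
have -> : pr P Y2 y = pr P (fun w => f (X2 w)) y by apply: eq_bigl => w; rewrite Y2E.
by rewrite !pr_comp; congr plogp; apply: eq_bigr => x _; rewrite X12.
Qed.

Lemma entropy_uniform (b : R) (T : finType) (X : Omega -> T) (x0 : T) :
  \sum_w P w = 1 -> (forall x, pr P X x = pr P X x0) ->
  entropy P b X = ln #|T|%:R / ln b.
Proof.
move=> P_sum1 X_unif; set p0 := pr P X x0.
have card_p0 : #|T|%:R * p0 = 1.
  rewrite -[RHS]P_sum1 (partition_big X predT) //= (eq_bigr (fun _ => p0)) => [|x _].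
    by rewrite sumr_const mulr_natl.
  exact: X_unif.
have p0_neq0 : p0 != 0.
  by apply/eqP => p00; move: card_p0; rewrite p00 mulr0 => /eqP; rewrite eq_sym oner_eq0.
have cardT_neq0 : #|T|%:R != 0 :> R.
  by apply/eqP => c0; move: card_p0; rewrite c0 mul0r => /eqP; rewrite eq_sym oner_eq0.
have p0E : p0 = (#|T|%:R)^-1 by apply: (mulfI cardT_neq0); rewrite card_p0 divff.
rewrite /entropy (eq_bigr (fun _ => plogp b p0)) => [|x _]; last by rewrite X_unif.
rewrite sumr_const -(mulr_natr (plogp b p0)) /plogp (negbTE p0_neq0) p0E.
rewrite lnV ?posrE; last by rewrite lt0r cardT_neq0 ler0n.
have [lnb0|lnb_neq0] := eqVneq (ln b) 0; first by rewrite lnb0 invr0 !(mulr0, mul0r, oppr0).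
by field; rewrite lnb_neq0 cardT_neq0.
Qed.

End Laws.

Section Scheme.
Variables (R : realType) (Omega : finType) (P : {ffun Omega -> R})
  (F : finFieldType) (N K L M m : nat) (C TF TQ TA : finType)
  (W : Omega -> msg_t F K L) (RS : Omega -> rand_t M C) (Fr : Omega -> TF)
  (Q : 'I_K -> {set 'I_M} -> 'I_N -> Omega -> TQ)
  (A : 'I_K -> {set 'I_M} -> 'I_N -> Omega -> TA).
Local Notation q := (#|F|%:R : R).

Lemma msg_split (k : 'I_K) w v :
  (W v == W w) = (Wk W k v == Wk W k w) && (Wbar W k v == Wbar W k w).
Proof.
apply/eqP/andP => [Wvw|[/eqP Wkvw /eqP Wbvw]]; first by rewrite /Wk /Wbar Wvw.
apply/ffunP => i; have := congr1 (fun f : {ffun _} => f i) Wbvw; rewrite /Wbar !ffunE.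
by case: (eqVneq i k) => [-> _|_ [] //]; exact: Wkvw.
Qed.

Lemma rand_split (S : {set 'I_M}) w v :
  (RS v == RS w) = (restrRV RS S v == restrRV RS S w) && (restrRV RS (~: S) v == restrRV RS (~: S) w).
Proof.
apply/eqP/andP => [RSvw|[/eqP RUvw /eqP RVvw]]; first by rewrite /restrRV RSvw.
apply/ffunP => i; have := congr1 (fun f : {ffun _} => f i) RUvw.
have := congr1 (fun f : {ffun _} => f i) RVvw; rewrite /restrRV !ffunE inE.
by case: (i \in S) => /= [_ []|[]].
Qed.

Lemma entropy_msg (k : 'I_K) :
  \sum_w P w = 1 -> (forall x : msg_t F K L, pr P W x = 1 / (#|F| ^ (K * L))%:R) ->
  entropy P q (Wk W k) = L%:R.
Proof.
move=> P_sum1 W_unif.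
have Wk_unif y : pr P (Wk W k) y = pr P (Wk W k) 0.
  pose shift (x : msg_t F K L) : msg_t F K L := [ffun i => if i == k then x i + y else x i].
  have shift_inj : injective shift.
    move=> x1 x2 /ffunP e; apply/ffunP => i; have := e i; rewrite !ffunE.
    by case: (i == k) => //; apply: addIr.
  rewrite !(pr_comp P W (fun x : msg_t F K L => x k)) (reindex_inj shift_inj) /=.
  apply: eq_big => [x|x _]; last by rewrite !W_unif.
  by rewrite /shift ffunE eqxx -{2}[y]add0r (inj_eq (addIr y)).
have q_gt1 : 1 < q by rewrite ltr1n card_finNzRing_gt1.
rewrite (entropy_uniform q P_sum1 Wk_unif) card_ffun card_ord natrX lnXn; last first.
  exact: lt_trans q_gt1.
by rewrite -(mulr_natr (ln q)) mulrAC divff ?mul1r // gt_eqF // ln_gt0.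
Qed.

(* User privacy (C6) transfers the independence of an unrequested message
   from a query-answer pair (a consequence of (C3) and (C7) for the other
   index k') to the retrieval of W_k. *)
Lemma Wk_indep_answer (k k' : 'I_K) (S : {set 'I_M}) (j : 'I_N) :
  k != k' -> #|S| = m ->
  @valid_scheme R Omega P F N K L M m C TF TQ TA W RS Fr Q A ->
  minfo P q (Wk W k) (pairRV (A k S j) (Q k S j)) = 0.
Proof.
move=> kk' hS [[P_ge0 P_sum1] [_ [_ [C23 [_ [C578 C6]]]]]].
have q_gt1 : 1 < q by rewrite ltr1n card_finNzRing_gt1.
have [S' [hS' _] same_law] := C6 k k' j S hS.
have [_ C7 _] := C578 k' S' hS'.
have Q_det : entropy P q (pairRV (Q k' S' j) Fr) = entropy P q Fr.
  apply: coordinate_determined => //; have := (C23 k' S' hS').2; rewrite /condH; lra.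
have indep' : minfo P q (Wk W k) (pairRV (A k' S' j) (Q k' S' j)) = 0.
  apply: (unrequested_indep P_ge0 P_sum1 q_gt1 (Wb := Wbar W k')) Q_det C7.
  move=> w v /eqP Wbvw; have := congr1 (fun f : {ffun _} => f k) Wbvw.
  by rewrite /Wbar !ffunE (negbTE kk') /Wk => -[->].
rewrite -indep' /minfo.
have -> : entropy P q (pairRV (A k S j) (Q k S j))
        = entropy P q (pairRV (A k' S' j) (Q k' S' j)).
  exact: (entropy_same_law (f := fun t => (t.1.1.2, t.1.1.1)) q same_law).
have -> // : entropy P q (pairRV (Wk W k) (pairRV (A k S j) (Q k S j)))
           = entropy P q (pairRV (Wk W k) (pairRV (A k' S' j) (Q k' S' j))).
exact: (entropy_same_law q
  (f := fun t : TQ * TA * msg_t F K L * rand_t M C => (t.1.2 k, (t.1.1.2, t.1.1.1))) same_law).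
Qed.

End Scheme.

Lemma rate_of_bound (R : realType) (n L x y : R) :
  1 < n -> 0 < L -> L <= x + (n - 1) * y ->
  n / (n - 1) * (x / L) + n * (y / L) >= n / (n - 1).
Proof.
move=> n_gt1 L_gt0 bound; rewrite -subr_ge0.
have n1_gt0 : 0 < n - 1 by rewrite subr_gt0.
have -> : n / (n - 1) * (x / L) + n * (y / L) - n / (n - 1)
        = n / (n - 1) * ((x + (n - 1) * y - L) / L) by field; rewrite !gt_eqF.
have n_gt0 : 0 < n by apply: lt_trans n_gt1.
apply: mulr_ge0; apply: divr_ge0; [exact: ltW | exact: ltW | by rewrite subr_ge0 | exact: ltW].
Qed.

Theorem lemma10 (R : realType) (Omega : finType) (P : {ffun Omega -> R})
  (F : finFieldType) (N K L M m : nat) (C TF TQ TA : finType)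
  (W : Omega -> msg_t F K L) (RS : Omega -> rand_t M C) (Fr : Omega -> TF)
  (Q : 'I_K -> {set 'I_M} -> 'I_N -> Omega -> TQ)
  (A : 'I_K -> {set 'I_M} -> 'I_N -> Omega -> TA) :
  (2 <= N)%N -> (2 <= K)%N -> (1 <= L)%N ->
  @valid_scheme R Omega P F N K L M m C TF TQ TA W RS Fr Q A ->
  forall S : {set 'I_M}, #|S| = m ->
    let q : R := #|F|%:R in
    let rhoU := entropy P q (restrRV RS S) / L%:R in
    let rhoS := entropy P q RS / L%:R in
    N%:R / (N%:R - 1) * rhoU + N%:R * rhoS >= N%:R / (N%:R - 1).
Proof.
move=> N_ge2 K_ge2 L_gt0 valid S hS; cbv zeta; set q : R := #|F|%:R.
case: N Q A N_ge2 valid => [//|n] Q A N_ge2 valid.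
have [[P_ge0 P_sum1] [W_unif [C1 [C23 [C4 [C578 _]]]]]] := valid.
have q_gt1 : 1 < q by rewrite ltr1n card_finNzRing_gt1.
(* retrieve k = 0, whose privacy is witnessed by the other index k' = 1 *)
pose k : 'I_K := Ordinal (ltnW K_ge2); pose k' : 'I_K := Ordinal K_ge2.
have [C5 C7 C8] := C578 k S hS.
have bound := Wk_entropy_bound P_ge0 P_sum1 q_gt1 (msg_split W k) (rand_split RS S)
  (C1 S hS) (C23 k S hS).2 (fun j => C4 k S j hS) C5 C7 C8
  (fun j => Wk_indep_answer (k := k) (k' := k') j isT hS valid).
rewrite entropy_msg // in bound.
apply: rate_of_bound; rewrite ?ltr1n ?ltr0n //.
by rewrite -addn1 natrD addrK.
Qed.
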